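(* Let $G$ be a digraph, let $i\le 0\le j$ be integers, and let $\Sigma$ be a set of balanced equations in some operation symbols. Then $G^{[i,j]}$ has idempotent polymorphisms satisfying $\Sigma$ if and only if $G$ has idempotent polymorphisms satisfying $\Sigma$.
   Context: Digraphs are finite and loopless. For a digraph $G=(V,E)$ and integers $i\le0\le j$, $G^{[i,j]}$ is the digraph on $\{i,\dots,-1\}\cup V\cup\{1,\dots,j\}$ (disjoint union) whose edges are: $u\to w$ for integers $u<w$ in $\{i,\dots,-1,1,\dots,j\}$; the edges of $E$; $u\to v$ for every integer $u<0$ and $v\in V$; $v\to u$ for every $v\in V$ and integer $u>0$. A polymorphism of arity $k$ is a map $f:V^k\to V$ with $(f(a_1,\dots,a_k),f(b_1,\dots,b_k))\in E$ whenever all $(a_i,b_i)\in E$; it is idempotent if $f(x,\dots,x)=x$. An equation $s(x_1,\dots,x_m)=t(y_1,\dots,y_n)$ is balanced if $\{x_1,\dots,x_m\}=\{y_1,\dots,y_n\}$. Polymorphisms satisfy $\Sigma$ if the equations hold for all values of the variables. *)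

From mathcomp Require Import all_boot all_order all_algebra.
Set Implicit Arguments. Unset Strict Implicit. Unset Printing Implicit Defensive.
Import Order.TTheory GRing.Theory Num.Theory.
Local Open Scope ring_scope.

(* A digraph is a finite type V with an edge relation E : rel V; loopless
   means irreflexive E. *)

(* Vertex set of G^{[i,j]}: {i,...,-1} + V + {1,...,j} (disjoint union). *)
Definition ext_vert (V : Type) (i j : int) : Type :=
  ({u : int | (i <= u) && (u <= -1)} + V + {u : int | (1 <= u) && (u <= j)})%type.

Definition ext_edge (V : Type) (E : rel V) (i j : int) : rel (ext_vert V i j) :=
  fun x y =>
    match x, y with
    | inl (inl u), inl (inl w) => sval u < sval w
    | inl (inl u), inr w => sval u < sval w
    | inr u, inl (inl w) => sval u < sval w
    | inr u, inr w => sval u < sval w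
    | inl (inr v), inl (inr w) => E v w
    | inl (inl _), inl (inr _) => true
    | inl (inr _), inr _ => true
    | _, _ => false
    end.

Arguments ext_edge {V} E i j.

Definition polymorphism (V : Type) (E : rel V) (k : nat)
    (f : ('I_k -> V) -> V) : Prop :=
  forall a b : 'I_k -> V, (forall l, E (a l) (b l)) -> E (f a) (f b).

Definition idempotent_op (V : Type) (k : nat) (f : ('I_k -> V) -> V) : Prop :=
  forall x : V, f (fun _ => x) = x.

(* An equation s(x_1,...,x_m) = t(y_1,...,y_n) over operation symbols Sym
   (with arities ar) and variables X. *)
Record equation (Sym : Type) (ar : Sym -> nat) (X : Type) := Equation {
  lsym : Sym;
  lvars : 'I_(ar lsym) -> X;
  rsym : Sym;
  rvars : 'I_(ar rsym) -> X }.

Definition balanced (Sym : Type) (ar : Sym -> nat) (X : Type)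
    (e : equation ar X) : Prop :=
  forall x : X, (exists l, @lvars Sym ar X e l = x) <-> (exists r, @rvars Sym ar X e r = x).

Definition satisfies (V : Type) (Sym : Type) (ar : Sym -> nat) (X : Type)
    (Sigma : equation ar X -> Prop)
    (f : forall s : Sym, ('I_(ar s) -> V) -> V) : Prop :=
  forall e, Sigma e -> forall val : X -> V,
    f (lsym e) (fun l => val (@lvars Sym ar X e l)) =
    f (rsym e) (fun r => val (@rvars Sym ar X e r)).

Definition has_idem_pols_satisfying (V : Type) (E : rel V)
    (Sym : Type) (ar : Sym -> nat) (X : Type)
    (Sigma : equation ar X -> Prop) : Prop :=
  exists f : forall s : Sym, ('I_(ar s) -> V) -> V,
    (forall s, polymorphism E (f s) /\ idempotent_op (f s)) /\ satisfies Sigma f.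

From Pilot Require Import Defs.
From mathcomp Require Import all_boot all_order all_algebra.
From mathcomp Require Import zify.
Import Order.TTheory GRing.Theory Num.Theory.
Set Implicit Arguments. Unset Strict Implicit. Unset Printing Implicit Defensive.
Local Open Scope ring_scope.

(* The level of a vertex of G^[i,j] is the integer itself, or 0 for a vertex
   of G; edges never decrease the level.  An idempotent polymorphism F of
   G^[i,j] maps tuples of G into G: if F a had level < 0, the constant tuple
   at level -1 lies below a, so F a would lie above -1.  Hence F restricts to
   G.  Conversely, a polymorphism f of G extends by returning the argument of
   least level if that level is negative, else the argument of greatest level
   if that level is positive, else f.  In the first two cases the value only
   depends on the set of arguments, so balanced identities survive, and in
   the last they are those of f.  Looplessness rules out nullary symbols, which
   provides an index to read these extrema from. *)

Section Levels.
Variables (V : Type) (i j : int).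
Local Notation EV := (ext_vert V i j).

Definition level (x : EV) : int :=
  match x with inl (inl u) => sval u | inl (inr _) => 0 | inr u => sval u end.

Definition vert_or (d : V) (x : EV) : V := if x is inl (inr v) then v else d.

Lemma level_eq0 (x : EV) : level x = 0 -> exists v, x = inl (inr v).
Proof. by case: x => [[[u hu]|v]|[u hu]] /=; [lia|exists v|lia]. Qed.

Lemma level_inj (x y : EV) : level x = level y -> level x != 0 -> x = y.
Proof.
case: x => [[[u hu]|v]|[u hu]];
case: y => [[[w hw]|w]|[w hw]] //= eq_uw; try lia.
- by move=> _; do 2!congr inl; apply: val_inj.
- by move=> _; congr inr; apply: val_inj.
Qed.

Lemma exists_level_neg1 (x : EV) : level x < 0 -> exists y : EV, level y = -1.
Proof.
case: x => [[[u hu]|v]|[u hu]] //= u_lt0; last by lia.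
have in_range : (i <= -1) && ((-1 : int) <= -1) by lia.
by exists (inl (inl (exist _ (-1) in_range))).
Qed.

Lemma exists_level_1 (x : EV) : 0 < level x -> exists y : EV, level y = 1.
Proof.
case: x => [[[u hu]|v]|[u hu]] //= u_gt0; first by lia.
have in_range : ((1 : int) <= 1) && (1 <= j) by lia.
by exists (inr (exist _ 1 in_range)).
Qed.

Variable E : rel V.

Lemma ext_edge_level (x y : EV) : ext_edge E i j x y ->
  level x < level y \/ level x = 0 /\ level y = 0.
Proof.
by case: x => [[[u hu]|v]|[u hu]];
   case: y => [[[w hw]|w]|[w hw]] //=; lia.
Qed.

Lemma ext_edge_level_lt (x y : EV) :
  level x < level y -> level x < 0 \/ 0 < level y -> ext_edge E i j x y.
Proof.
by case: x => [[[u hu]|v]|[u hu]];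
   case: y => [[[w hw]|w]|[w hw]] //=; lia.
Qed.

Lemma ext_edge_vert_or (d d' : V) (x y : EV) : level x = 0 -> level y = 0 ->
  ext_edge E i j x y -> E (vert_or d x) (vert_or d' y).
Proof. by move=> /level_eq0[v ->] /level_eq0[w ->]. Qed.

Lemma ext_edge_irreflexive : irreflexive E -> irreflexive (ext_edge E i j).
Proof. by move=> irrE [[[u ?]|v]|[u ?]] /=; rewrite ?ltxx ?irrE. Qed.

End Levels.

Lemma polymorphism_arity_gt0 (T : Type) (R : rel T) (k : nat) (f : ('I_k -> T) -> T) :
  irreflexive R -> polymorphism R f -> (0 < k)%N.
Proof.
case: k f => // f irrR polyf; have no_index (l : 'I_0) : False by case: l.
pose a (l : 'I_0) := False_rect T (no_index l).
by have := polyf a a (fun l => False_ind _ (no_index l)); rewrite irrR.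
Qed.

Section Extension.
Variables (V : finType) (i j : int) (k : nat) (l0 : 'I_k) (f : ('I_k -> V) -> V).
Local Notation EV := (ext_vert V i j).

(* The default vertex [d] is chosen independently of [a]: identities of [f]
   transfer only when both sides are fed the same valuation. *)
Definition ext_op (a : 'I_k -> EV) : EV :=
  let lo := a [arg min_(l < l0) level (a l)]%O in
  let hi := a [arg max_(l > l0) level (a l)]%O in
  if level lo < 0 then lo else if 0 < level hi then hi else
  if [pick v : V] is Some d then inl (inr (f (fun l => vert_or d (a l)))) else lo.

Variant ext_op_spec (a : 'I_k -> EV) : EV -> Prop :=
| ExtOpMin l of level (a l) < 0 & (forall l', level (a l) <= level (a l')) :
    ext_op_spec a (a l)
| ExtOpMax l of 0 < level (a l) & (forall l', 0 <= level (a l') <= level (a l)) :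
    ext_op_spec a (a l)
| ExtOpMid d of [pick v : V] = Some d & (forall l, level (a l) = 0) :
    ext_op_spec a (inl (inr (f (fun l => vert_or d (a l))))).

Lemma ext_opP (a : 'I_k -> EV) : ext_op_spec a (ext_op a).
Proof.
rewrite /ext_op; case: arg_minP => // lo _ lo_min; case: arg_maxP => // hi _ hi_max.
have [lo_lt0|lo_ge0] := ltP (level (a lo)) 0.
  by apply: ExtOpMin => // l; apply: lo_min.
have [hi_gt0|hi_le0] := ltP 0 (level (a hi)).
  by apply: ExtOpMax => // l; have := lo_min l isT; have := hi_max l isT; lia.
have a_level0 l : level (a l) = 0 by have := lo_min l isT; have := hi_max l isT; lia.
case pick_eq: [pick v : V] => [d|]; first exact: ExtOpMid.
have [v _] := level_eq0 (a_level0 l0).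
by move: pick_eq; case: pickP => // /(_ v).
Qed.

Lemma ext_op_min (a : 'I_k -> EV) l :
  level (a l) < 0 -> (forall l', level (a l) <= level (a l')) -> ext_op a = a l.
Proof.
move=> al_lt0 al_min; case: ext_opP => [l' _ al'_min|l' _ al'_max|d _ a_level0].
- by apply: level_inj; have := al_min l'; have := al'_min l; lia.
- by have := al'_max l; lia.
- by have := a_level0 l; lia.
Qed.

Lemma ext_op_max (a : 'I_k -> EV) l :
  0 < level (a l) -> (forall l', 0 <= level (a l') <= level (a l)) -> ext_op a = a l.
Proof.
move=> al_gt0 al_max; case: ext_opP => [l' al'_lt0 _|l' _ al'_max|d _ a_level0].
- by have := al_max l'; lia.
- by apply: level_inj; have := al_max l'; have := al'_max l; lia.
- by have := a_level0 l; lia.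
Qed.

Lemma ext_op_mid (a : 'I_k -> EV) d : [pick v : V] = Some d ->
  (forall l, level (a l) = 0) -> ext_op a = inl (inr (f (fun l => vert_or d (a l)))).
Proof.
move=> pick_d a_level0; case: ext_opP => [l al_lt0 _|l al_gt0 _|d' pick_d' _].
- by have := a_level0 l; lia.
- by have := a_level0 l; lia.
- by move: pick_d'; rewrite pick_d => -[->].
Qed.

Lemma ext_op_poly (E : rel V) : polymorphism E f -> polymorphism (ext_edge E i j) ext_op.
Proof.
move=> polyf a b ab; have ab_level l := ext_edge_level (ab l).
case: ext_opP => [l al_lt0 al_min|l al_gt0 al_max|d pick_d a_level0].
- have below_b l' : level (a l) < level (b l').
    by have := ab_level l'; have := al_min l'; lia.
  apply: ext_edge_level_lt; last by left.
  by case: ext_opP => [l' _ _|l' _ _|d _ _] //=; apply: below_b.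
- have b_ge0 l' : 0 <= level (b l') by have := ab_level l'; have := al_max l'; lia.
  case: ext_opP => [l' bl'_lt0 _|l' _ bl'_max|d _ b_level0].
  + by have := b_ge0 l'; lia.
  + by apply: ext_edge_level_lt; have := ab_level l; have := bl'_max l; lia.
  + by have := b_level0 l; have := ab_level l; lia.
- case: ext_opP => [l' bl'_lt0 _|l' bl'_gt0 _|d' pick_d' b_level0].
  + by have := ab_level l'; have := a_level0 l'; lia.
  + by apply: ext_edge_level_lt => //; right.
  + move: pick_d'; rewrite pick_d => -[<-]; apply: polyf => l.
    exact: ext_edge_vert_or (a_level0 l) (b_level0 l) (ab l).
Qed.

Lemma ext_op_idem : Defs.idempotent_op f -> Defs.idempotent_op ext_op.
Proof.
by move=> idf x; case: ext_opP => // d _ /(_ l0) /level_eq0[v ->] /=; rewrite idf.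
Qed.

End Extension.

Section SameRange.
Variables (T : Type) (k k' : nat).

Definition same_range (a : 'I_k -> T) (b : 'I_k' -> T) : Prop :=
  forall y, (exists l, a l = y) <-> (exists r, b r = y).

Variables (a : 'I_k -> T) (b : 'I_k' -> T).
Hypothesis ab : same_range a b.

Lemma same_range_mem l : exists r, b r = a l.
Proof. by apply/ab; exists l. Qed.

Lemma same_range_forall (P : T -> Prop) : (forall l, P (a l)) -> forall r, P (b r).
Proof. by move=> Pa r; have [l <-] := (ab (b r)).2 (ex_intro _ r erefl). Qed.

End SameRange.

Lemma balanced_same_range (Sym : Type) (ar : Sym -> nat) (X T : Type)
    (e : equation ar X) (val : X -> T) :
  balanced e -> same_range (fun l => val (@lvars _ _ _ e l)) (fun r => val (@rvars _ _ _ e r)).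
Proof.
move=> bal_e y; split=> -[m <-].
- by have [r <-] := (bal_e _).1 (ex_intro _ m erefl); exists r.
- by have [l <-] := (bal_e _).2 (ex_intro _ m erefl); exists l.
Qed.

Lemma ext_op_same_range (V : finType) (i j : int) (k k' : nat) (l0 : 'I_k) (l0' : 'I_k')
    (f : ('I_k -> V) -> V) (f' : ('I_k' -> V) -> V)
    (a : 'I_k -> ext_vert V i j) (b : 'I_k' -> ext_vert V i j) :
  same_range a b -> (forall d, f (fun l => vert_or d (a l)) = f' (fun r => vert_or d (b r))) ->
  ext_op l0 f a = ext_op l0' f' b.
Proof.
move=> ab f_ab; case: ext_opP => [l al_lt0 al_min|l al_gt0 al_max|d pick_d a_level0].
- have [r br] := same_range_mem ab l; rewrite -br; symmetry.
  apply: ext_op_min; rewrite br //.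
  exact: (same_range_forall (P := fun y => level (a l) <= level y) ab al_min).
- have [r br] := same_range_mem ab l; rewrite -br; symmetry.
  apply: ext_op_max; rewrite br //.
  exact: (same_range_forall (P := fun y => 0 <= level y <= level (a l)) ab al_max).
- have b_level0 := same_range_forall (P := fun y => level y = 0) ab a_level0.
  by rewrite (ext_op_mid l0' f' pick_d b_level0) f_ab.
Qed.

Section Restriction.
Variables (V : Type) (E : rel V) (i j : int) (k : nat) (l0 : 'I_k).
Variable F : ('I_k -> ext_vert V i j) -> ext_vert V i j.
Hypotheses (polyF : polymorphism (ext_edge E i j) F) (idemF : Defs.idempotent_op F).

Lemma level_on_vertices (w : 'I_k -> V) : level (F (fun l => inl (inr (w l)))) = 0.
Proof.
set x := F _; have [x_lt0|x_gt0|//] := ltgtP (level x) 0.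
- have [y y_level] := exists_level_neg1 x_lt0.
  have : ext_edge E i j (F (fun=> y)) x.
    by apply: polyF => l; apply: ext_edge_level_lt; rewrite y_level /=; lia.
  by rewrite idemF => /ext_edge_level; lia.
- have [y y_level] := exists_level_1 x_gt0.
  have : ext_edge E i j x (F (fun=> y)).
    by apply: polyF => l; apply: ext_edge_level_lt; rewrite y_level /=; lia.
  by rewrite idemF => /ext_edge_level; lia.
Qed.

Definition restrict_op (w : 'I_k -> V) : V := vert_or (w l0) (F (fun l => inl (inr (w l)))).

Lemma restrict_opE (w : 'I_k -> V) :
  inl (inr (restrict_op w)) = F (fun l => inl (inr (w l))).
Proof. by rewrite /restrict_op; have [v ->] := level_eq0 (level_on_vertices w). Qed.

Lemma restrict_op_poly : polymorphism E restrict_op.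
Proof.
move=> w w' ww'.
change (ext_edge E i j (inl (inr (restrict_op w))) (inl (inr (restrict_op w')))).
by rewrite !restrict_opE; apply: polyF.
Qed.

Lemma restrict_op_idem : Defs.idempotent_op restrict_op.
Proof. by move=> v; rewrite /restrict_op /= idemF. Qed.

End Restriction.

Lemma has_idem_pols_restrict (V : Type) (E : rel V) (i j : int)
    (Sym : Type) (ar : Sym -> nat) (X : Type) (Sigma : equation ar X -> Prop) :
  irreflexive E -> has_idem_pols_satisfying (ext_edge E i j) Sigma ->
  has_idem_pols_satisfying E Sigma.
Proof.
move=> irrE [F [HF satF]].
have l0 s : 'I_(ar s) :=
  Ordinal (polymorphism_arity_gt0 (ext_edge_irreflexive irrE) (HF s).1).
have F_vertices s w := restrict_opE (l0 s) (HF s).1 (HF s).2 w.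
exists (fun s => restrict_op (l0 s) (F s)); split=> [s|e He val].
  by have [polyF idemF] := HF s; split; [apply: restrict_op_poly | apply: restrict_op_idem].
by have := satF e He (fun x => inl (inr (val x))); rewrite -!F_vertices => -[].
Qed.

Lemma has_idem_pols_extend (V : finType) (E : rel V) (i j : int)
    (Sym : Type) (ar : Sym -> nat) (X : Type) (Sigma : equation ar X -> Prop) :
  irreflexive E -> (forall e, Sigma e -> balanced e) ->
  has_idem_pols_satisfying E Sigma -> has_idem_pols_satisfying (ext_edge E i j) Sigma.
Proof.
move=> irrE bal_Sigma [f [Hf satf]].
have l0 s : 'I_(ar s) := Ordinal (polymorphism_arity_gt0 irrE (Hf s).1).
exists (fun s => ext_op (l0 s) (f s)); split=> [s|e He val].
  by have [polyf idemf] := Hf s; split; [apply: ext_op_poly | apply: ext_op_idem].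
apply: ext_op_same_range; first exact: balanced_same_range (bal_Sigma e He).
by move=> d; apply: (satf e He (fun x => vert_or d (val x))).
Qed.

Theorem proposition4p7 (V : finType) (E : rel V) (loopless : irreflexive E)
    (i j : int) (hi : i <= 0) (hj : 0 <= j)
    (Sym : Type) (ar : Sym -> nat) (X : Type)
    (Sigma : equation ar X -> Prop)
    (hbal : forall e, Sigma e -> balanced e) :
  has_idem_pols_satisfying (ext_edge E i j) Sigma <->
  has_idem_pols_satisfying E Sigma.
Proof.
split; [exact: has_idem_pols_restrict | exact: has_idem_pols_extend].
Qed.
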